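(* Given a network, assume hosts generate IPv6 addresses using Cryptographically Generated Addresses (CGA) with security parameter $0 \leq \mathit{sec} \leq 7$. Then the expected number of hash function evaluations required for an attacker to spoof a specific (target) address is \[ T_{CGA} = \begin{cases} 2^{59} & \text{if } \mathit{sec} = 0,\\ 2^{59} + \dfrac{2^{16\cdot \mathit{sec}+59}}{3} & \text{if } \mathit{sec} > 0. \end{cases} \]
   Context: An IPv6 address is 128 bits: the leftmost 64 bits are the subnet prefix and the rightmost 64 bits are the interface identifier. In CGA, a host forms a CGA Parameters data structure consisting of a 128-bit modifier, the 64-bit subnet prefix, an 8-bit collision count taking only the values 0, 1 or 2, the host's (DER-encoded) public key, and an extension field (empty by default). The address carries a 3-bit security parameter $\mathit{sec}\in\{0,\dots,7\}$ in the three leftmost bits of its interface identifier. Hash2 is the leftmost 112 bits of the hash of the CGA Parameters data structure with subnet prefix and collision count set to zero; Hash1 is the leftmost 64 bits of the hash of the full CGA Parameters data structure. Generation: the host iterates the modifier until the leftmost $16\cdot\mathit{sec}$ bits of Hash2 are zero (skipped if $\mathit{sec}=0$), then computes Hash1, and the interface identifier is Hash1 with the three leftmost bits replaced by $\mathit{sec}$ and the $u$ and $g$ bits (the 6th and 7th leftmost bits, counting from 0) set to zero; the address is subnet prefix concatenated with interface identifier. If a duplicate address is detected, the collision count is incremented and Hash1 recomputed (at most values 0,1,2). Verification of an address against a CGA Parameters data structure checks: collision count $\le 2$; subnet prefix matches the address; recomputed Hash1 matches the interface identifier (ignoring the $\mathit{sec}$, $u$, $g$ bits, so 59 bits must match);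 the leftmost $16\cdot\mathit{sec}$ bits of recomputed Hash2 are zero. Spoofing a specific address means finding a CGA Parameters data structure containing the attacker's own public key that passes verification for the target address. Hash outputs are modeled as uniformly random, and cost is measured in the number of hash function evaluations (each computation of Hash1 or Hash2 counts as one evaluation). *)

From Stdlib Require Import Reals List.
From Coquelicot Require Import Coquelicot.
Open Scope R_scope.

(* Probabilistic model of the brute-force spoofing attack on a CGA address
   (random-oracle model, as in the paper's cost analysis).

   The attacker (who must use its own public key) repeatedly picks a fresh
   modifier.  For each modifier:
   - if sec > 0 it evaluates Hash2 once (cost 1); the modifier is usable iff
     the leftmost 16*sec bits of Hash2 are zero, probability 2^-(16*sec).
     If sec = 0 no Hash2 is computed and every modifier is usable.
   - for a usable modifier it evaluates Hash1 for the three admissible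
     collision counts 0,1,2 (cost 3); each must match the 59 non-sec/u/g bits
     of the target interface identifier, giving 3 chances of 2^-59 each, i.e.
     success probability 3 * 2^-59 per usable modifier.
   The attack stops at the first successful modifier. *)

Definition num_collision_counts : nat := 3.
Definition matched_bits : nat := 59.

Definition hash2_pass_prob (sec : nat) : R :=
  if Nat.eqb sec 0 then 1 else / 2 ^ (16 * sec).
Definition hash2_cost (sec : nat) : R :=
  if Nat.eqb sec 0 then 0 else 1.
Definition hash1_cost : R := INR num_collision_counts.
Definition modifier_success_prob : R :=
  INR num_collision_counts * / 2 ^ matched_bits.

Inductive fail_kind : Type := FailHash2 | FailHash1.

Definition fail_prob (sec : nat) (k : fail_kind) : R :=
  match k with
  | FailHash2 => 1 - hash2_pass_prob sec
  | FailHash1 => hash2_pass_prob sec * (1 - modifier_success_prob)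
  end.
Definition fail_cost (sec : nat) (k : fail_kind) : R :=
  match k with
  | FailHash2 => hash2_cost sec
  | FailHash1 => hash2_cost sec + hash1_cost
  end.
Definition win_prob (sec : nat) : R := hash2_pass_prob sec * modifier_success_prob.
Definition win_cost (sec : nat) : R := hash2_cost sec + hash1_cost.

Fixpoint fail_seqs (n : nat) : list (list fail_kind) :=
  match n with
  | O => nil :: nil
  | S m => flat_map (fun l => (FailHash2 :: l) :: (FailHash1 :: l) :: nil) (fail_seqs m)
  end.

(* a run = a sequence of failed trials followed by a successful one *)
Definition run_prob (sec : nat) (l : list fail_kind) : R :=
  fold_right (fun k acc => fail_prob sec k * acc) 1 l * win_prob sec.
Definition run_cost (sec : nat) (l : list fail_kind) : R :=
  fold_right (fun k acc => fail_cost sec k + acc) 0 l + win_cost sec.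

(* contribution to the expected cost of runs with exactly n failed trials;
   the expected number of hash evaluations is the sum of this series *)
Definition expected_cost_term (sec : nat) (n : nat) : R :=
  fold_right Rplus 0 (map (fun l => run_prob sec l * run_cost sec l) (fail_seqs n)).

Definition T_CGA (sec : nat) : R :=
  if Nat.eqb sec 0 then 2 ^ 59
  else 2 ^ 59 + 2 ^ (16 * sec + 59) / 3.

(** Modifiers are tried independently, each succeeding with probability
    [w = 2^(-16 sec) * 3 * 2^(-59)] (Hash2 filter, then three collision counts
    against 59 bits).  Summing over the runs with exactly [n] failed modifiers
    gives [w * (n A q^(n-1) + W q^n)], where [q = 1 - w] is the failure mass,
    [A] the expected cost contributed by one failed trial and [W] the cost of
    the winning one.  Since [sum_n n q^(n-1) = 1/(1-q)^2] (the Cauchy square of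
    the geometric series), the expected cost is [A / w + W]; for [sec > 0] this
    is [2^(16 sec + 59)/3] Hash2 evaluations plus [2^59] Hash1 evaluations. *)

From Stdlib Require Import Reals Lra Lia List.
From Coquelicot Require Import Coquelicot.
Open Scope R_scope.

Definition list_sum {A : Type} (g : A -> R) (L : list A) : R :=
  fold_right Rplus 0 (map g L).

Lemma list_sum_ext {A : Type} (g h : A -> R) (L : list A) :
  (forall x, g x = h x) -> list_sum g L = list_sum h L.
Proof.
  intros Hgh; induction L as [|x L IH]; unfold list_sum in *; simpl; [reflexivity|].
  now rewrite IH, Hgh.
Qed.

Lemma list_sum_lin {A : Type} (g h : A -> R) (a b : R) (L : list A) :
  list_sum (fun x => a * g x + b * h x) L = a * list_sum g L + b * list_sum h L.
Proof.
  induction L as [|x L IH]; unfold list_sum in *; simpl; [ring|].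
  rewrite IH; ring.
Qed.

Lemma list_sum_app {A : Type} (g : A -> R) (L M : list A) :
  list_sum g (L ++ M) = list_sum g L + list_sum g M.
Proof.
  induction L as [|x L IH]; unfold list_sum in *; simpl; [ring|].
  rewrite IH; ring.
Qed.

Lemma list_sum_flat_map {A B : Type} (g : B -> R) (f : A -> list B) (L : list A) :
  list_sum g (flat_map f L) = list_sum (fun x => list_sum g (f x)) L.
Proof.
  induction L as [|x L IH]; [reflexivity|].
  simpl; rewrite list_sum_app, IH; reflexivity.
Qed.

Lemma list_sum_fail_seqs_S (g : list fail_kind -> R) (n : nat) :
  list_sum g (fail_seqs (S n))
  = list_sum (fun l => g (FailHash2 :: l) + g (FailHash1 :: l)) (fail_seqs n).
Proof.
  simpl fail_seqs; rewrite list_sum_flat_map.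
  apply list_sum_ext; intros l; unfold list_sum; simpl; ring.
Qed.

Section FailedTrials.

Variables (p c : fail_kind -> R).

Definition seq_prob (l : list fail_kind) : R := fold_right (fun k acc => p k * acc) 1 l.
Definition seq_cost (l : list fail_kind) : R := fold_right (fun k acc => c k + acc) 0 l.
Definition fail_mass : R := p FailHash2 + p FailHash1.
Definition fail_mean_cost : R := p FailHash2 * c FailHash2 + p FailHash1 * c FailHash1.

Lemma sum_seq_prob (n : nat) : list_sum seq_prob (fail_seqs n) = fail_mass ^ n.
Proof.
  induction n as [|n IH]; [unfold list_sum; simpl; ring|].
  rewrite list_sum_fail_seqs_S.
  rewrite (list_sum_ext _ (fun l => p FailHash2 * seq_prob l + p FailHash1 * seq_prob l))
    by reflexivity.
  rewrite list_sum_lin, IH; unfold fail_mass; simpl; ring.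
Qed.

Lemma sum_seq_prob_cost (n : nat) :
  list_sum (fun l => seq_prob l * seq_cost l) (fail_seqs n)
  = INR n * fail_mean_cost * fail_mass ^ pred n.
Proof.
  induction n as [|n IH]; [unfold list_sum; simpl; ring|].
  rewrite list_sum_fail_seqs_S.
  rewrite (list_sum_ext _
             (fun l => fail_mean_cost * seq_prob l + fail_mass * (seq_prob l * seq_cost l)))
    by (intros l; unfold seq_prob, seq_cost, fail_mean_cost, fail_mass; simpl; ring).
  rewrite list_sum_lin, IH, sum_seq_prob.
  destruct n; simpl; ring.
Qed.

End FailedTrials.

Lemma sum_f_R0_pow_convolution (q : R) (n m : nat) : (m <= n)%nat ->
  sum_f_R0 (fun k => q ^ k * q ^ (n - k)) m = INR (S m) * q ^ n.
Proof.
  induction m as [|m IH]; intros Hmn.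
  - simpl; rewrite Nat.sub_0_r; ring.
  - rewrite tech5, IH by lia.
    rewrite <- pow_add; replace (S m + (n - S m))%nat with n by lia.
    rewrite (S_INR (S m)); ring.
Qed.

Lemma is_series_geom_deriv (q : R) : 0 <= q < 1 ->
  is_series (fun n => INR n * q ^ pred n) (/ (1 - q) * / (1 - q)).
Proof.
  intros Hq.
  assert (Hgeom : is_series (fun n => q ^ n) (/ (1 - q))).
  { apply is_series_geom; rewrite Rabs_right; lra. }
  pose proof (is_series_mult_pos _ _ _ _ Hgeom Hgeom
                (fun n => pow_le q n (proj1 Hq)) (fun n => pow_le q n (proj1 Hq))) as Hsq.
  apply is_series_decr_1.
  match goal with |- is_series _ ?l => replace l with (/ (1 - q) * / (1 - q)) by (cbn; ring) end.
  eapply is_series_ext; [|exact Hsq].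
  intros n; simpl.
  rewrite sum_f_R0_pow_convolution, S_INR by lia.
  destruct n; simpl; ring.
Qed.

Lemma is_series_geometric_cost (w A W : R) : 0 < w <= 1 ->
  is_series (fun n => w * (INR n * A * (1 - w) ^ pred n + W * (1 - w) ^ n)) (A / w + W).
Proof.
  intros Hw.
  assert (Hq : 0 <= 1 - w < 1) by lra.
  assert (Hq_abs : Rabs (1 - w) < 1) by (rewrite Rabs_right; lra).
  pose proof (is_series_scal_r A _ _ (is_series_geom_deriv _ Hq)) as Hfail.
  pose proof (is_series_scal_r W _ _ (is_series_geom _ Hq_abs)) as Hwin.
  pose proof (is_series_scal_l w _ _ (is_series_plus _ _ _ _ Hfail Hwin)) as Hsum.
  replace (A / w + W) with (w * (/ (1 - (1 - w)) * / (1 - (1 - w)) * A + / (1 - (1 - w)) * W))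
    by (field; lra).
  eapply is_series_ext; [|exact Hsum].
  intros n; cbn; ring.
Qed.

Lemma fail_mass_fail_prob (sec : nat) : fail_mass (fail_prob sec) = 1 - win_prob sec.
Proof. unfold fail_mass, win_prob, fail_prob; ring. Qed.

Lemma win_prob_bounds (sec : nat) : 0 < win_prob sec <= 1.
Proof.
  assert (Hmod : 0 < modifier_success_prob <= 1).
  { unfold modifier_success_prob, num_collision_counts, matched_bits; simpl INR.
    assert (H59 : 4 <= 2 ^ 59) by (replace 4 with (2 ^ 2) by ring; apply Rle_pow; [lra|lia]).
    split.
    - apply Rmult_lt_0_compat; [lra|apply Rinv_0_lt_compat; lra].
    - apply (Rmult_le_reg_r (2 ^ 59)); [lra|].
      rewrite Rmult_assoc, Rinv_l by lra; lra. }
  assert (Hpass : 0 < hash2_pass_prob sec <= 1).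
  { unfold hash2_pass_prob; destruct (Nat.eqb sec 0); [lra|].
    assert (H1 : 1 <= 2 ^ (16 * sec)) by (apply pow_R1_Rle; lra).
    split; [apply Rinv_0_lt_compat; lra|].
    rewrite <- Rinv_1; apply Rinv_le_contravar; lra. }
  unfold win_prob; split; [apply Rmult_lt_0_compat; lra|].
  rewrite <- (Rmult_1_r 1); apply Rmult_le_compat; lra.
Qed.

Lemma expected_cost_term_eq (sec n : nat) :
  expected_cost_term sec n
  = win_prob sec * (INR n * fail_mean_cost (fail_prob sec) (fail_cost sec)
                      * (1 - win_prob sec) ^ pred n
                    + win_cost sec * (1 - win_prob sec) ^ n).
Proof.
  unfold expected_cost_term.
  fold (list_sum (fun l => run_prob sec l * run_cost sec l) (fail_seqs n)).
  rewrite (list_sum_ext _ (fun l =>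
             win_prob sec * (seq_prob (fail_prob sec) l * seq_cost (fail_cost sec) l)
             + (win_prob sec * win_cost sec) * seq_prob (fail_prob sec) l))
    by (intros l; unfold run_prob, run_cost, seq_prob, seq_cost; ring).
  rewrite list_sum_lin, sum_seq_prob_cost, sum_seq_prob, fail_mass_fail_prob; ring.
Qed.

Lemma expected_cost_closed_form (sec : nat) :
  fail_mean_cost (fail_prob sec) (fail_cost sec) / win_prob sec + win_cost sec = T_CGA sec.
Proof.
  pose proof (win_prob_bounds sec) as Hw.
  unfold fail_mean_cost, T_CGA, win_prob, win_cost, fail_prob, fail_cost,
    modifier_success_prob, hash2_pass_prob, hash2_cost, hash1_cost,
    num_collision_counts, matched_bits in *.
  assert (H59 : 2 ^ 59 <> 0) by (apply pow_nonzero; lra).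
  destruct sec as [|s]; simpl Nat.eqb in *; simpl INR in *; cbv iota in *.
  - field; split; lra.
  - assert (Hs : 2 ^ (16 * S s) <> 0) by (apply pow_nonzero; lra).
    rewrite pow_add; field; auto.
Qed.

Theorem lemma1 (sec : nat) (Hsec : (sec <= 7)%nat) :
  is_series (expected_cost_term sec) (T_CGA sec).
Proof.
  rewrite <- expected_cost_closed_form.
  eapply is_series_ext; [intros n; symmetry; apply expected_cost_term_eq|].
  apply is_series_geometric_cost, win_prob_bounds.
Qed.
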